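(* Let $M$ be a $po$-$\Gamma$-semigroup. If $M$ is completely regular, then $B=(B\Gamma B]$ for every bi-ideal $B$ of $M$. Conversely, if $B=(B\Gamma B]$ for every bi-ideal $B$ of $M$, then $M$ is regular.
   Context: A $po$-$\Gamma$-semigroup is a triple $(M,\Gamma,\le)$ where $M,\Gamma$ are nonempty sets with a map $M\times\Gamma\times M\to M$, $(a,\gamma,b)\mapsto a\gamma b$, satisfying $(a\gamma b)\mu c=a\gamma(b\mu c)$ for all $a,b,c\in M$, $\gamma,\mu\in\Gamma$, and $\le$ is a partial order on $M$ such that $a\le b$ implies $a\gamma c\le b\gamma c$ and $c\gamma a\le c\gamma b$ for all $c\in M$, $\gamma\in\Gamma$. For $A,B\subseteq M$, $A\Gamma B=\{a\gamma b: a\in A,\gamma\in\Gamma,b\in B\}$ (with $a\Gamma B$ meaning $\{a\}\Gamma B$, etc.), and $(A]=\{t\in M: t\le a \text{ for some } a\in A\}$. $M$ is regular if $a\in(a\Gamma M\Gamma a]$ for all $a\in M$; left regular if $a\in(M\Gamma a\Gamma a]$ for all $a\in M$; right regular if $a\in(a\Gamma a\Gamma M]$ for all $a\in M$; completely regular if it is regular, left regular and right regular. A bi-ideal of $M$ is a nonempty subset $B\subseteq M$ such that $B\Gamma M\Gamma B\subseteq B$ and, whenever $a\in B$, $b\in M$ and $b\le a$, then $b\in B$. *)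

Set Implicit Arguments.

Record poGammaSemigroup := {
  carrier : Type;
  gamma : Type;
  op : carrier -> gamma -> carrier -> carrier;
  le : carrier -> carrier -> Prop;
  carrier_inhabited : inhabited carrier;
  gamma_inhabited : inhabited gamma;
  op_assoc : forall (a b c : carrier) (g m : gamma),
      op (op a g b) m c = op a g (op b m c);
  le_refl : forall a, le a a;
  le_antisym : forall a b, le a b -> le b a -> a = b;
  le_trans : forall a b c, le a b -> le b c -> le a c;
  le_op_r : forall a b c g, le a b -> le (op a g c) (op b g c);
  le_op_l : forall a b c g, le a b -> le (op c g a) (op c g b)
}.

Section Defs.
Variable M : poGammaSemigroup.
Notation T := (carrier M).

Definition gprod (A B : T -> Prop) : T -> Prop :=
  fun t => exists a g b, A a /\ B b /\ t = op M a g b.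

(* (A] = { t : t <= a for some a in A } *)
Definition down (A : T -> Prop) : T -> Prop :=
  fun t => exists a, A a /\ le M t a.

Definition singl (a : T) : T -> Prop := fun x => x = a.
Definition fullset : T -> Prop := fun _ => True.

Definition regular : Prop :=
  forall a, down (gprod (gprod (singl a) fullset) (singl a)) a.
Definition left_regular : Prop :=
  forall a, down (gprod (gprod fullset (singl a)) (singl a)) a.
Definition right_regular : Prop :=
  forall a, down (gprod (gprod (singl a) (singl a)) fullset) a.
Definition completely_regular : Prop :=
  regular /\ left_regular /\ right_regular.

Definition bi_ideal (B : T -> Prop) : Prop :=
  (exists b, B b) /\
  (forall x, gprod (gprod B fullset) B x -> B x) /\
  (forall a b, B a -> le M b a -> B b).

Definition set_eq (A B : T -> Prop) : Prop := forall x, A x <-> B x.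
End Defs.

Arguments gprod M A B _ : clear implicits.
Arguments down M A _ : clear implicits.
Arguments singl M a _ : clear implicits.
Arguments fullset M _ : clear implicits.
Arguments bi_ideal M B : clear implicits.
Arguments set_eq M A B : clear implicits.

(* The bi-ideals are closed under the multiplication [x g y] as soon as M is
   regular: [x g y <= (x g m h x) g y], which lies in [B Gamma M Gamma B].
   For [B <= (B Gamma B]], combine [x <= x g m h x] with right regularity
   [x <= x g' x h' b]: substituting the second inequality in the first gives
   [x <= x g' (x h' b g m h x)], and the right factor lies in B.
   Conversely, the hypothesis applied to the bi-ideal [({a} U a Gamma M Gamma a]]
   generated by a puts a below a product of two of its elements; every such
   product lies in [a Gamma M Gamma a] except [a g a], and [a <= a g a] gives
   [a <= a g (a g a)]. *)
From Stdlib Require Import Setoid.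

Section PoGammaSemigroup.
Variable M : poGammaSemigroup.
Notation T := (carrier M).
Notation op := (op M).
Notation le := (le M).
Notation le_trans := (le_trans M _ _ _).
Notation le_op_l := (le_op_l M _ _ _ _).
Notation le_op_r := (le_op_r M _ _ _ _).

Definition sandwich (a : T) : T -> Prop :=
  gprod M (gprod M (singl M a) (fullset M)) (singl M a).

Lemma sandwichP (a t : T) :
  sandwich a t <-> exists g m h, t = op (op a g m) h a.
Proof.
  split.
  - intros [p [h [b [[a' [g [m [Ha' [_ Hp]]]]] [Hb Ht]]]]].
    unfold singl in *; subst; eauto.
  - intros [g [m [h Ht]]]. exists (op a g m), h, a.
    repeat split; [|exact Ht]. exists a, g, m. repeat split.
Qed.

Lemma regularP :
  regular M <-> forall a : T, exists g m h, le a (op (op a g m) h a).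
Proof.
  split.
  - intros Hreg a. destruct (Hreg a) as [t [Ht Hle]].
    apply sandwichP in Ht. destruct Ht as [g [m [h ->]]]. eauto.
  - intros Hreg a. destruct (Hreg a) as [g [m [h Hle]]].
    exists (op (op a g m) h a). split; [apply sandwichP; eauto|exact Hle].
Qed.

Lemma right_regular_le :
  right_regular M -> forall a : T, exists g h m, le a (op (op a g a) h m).
Proof.
  intros Hrr a.
  destruct (Hrr a) as [t [[p [h [m [[a1 [g [a2 [Ha1 [Ha2 Hp]]]]] [_ Ht]]]]] Hle]].
  unfold singl in *; subst; eauto.
Qed.

Section BiIdeal.
Variable B : T -> Prop.
Hypothesis HB : bi_ideal M B.

Lemma bi_ideal_mul3 (u v m : T) (g h : gamma M) :
  B u -> B v -> B (op (op u g m) h v).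
Proof.
  intros Hu Hv. apply (proj1 (proj2 HB)). exists (op u g m), h, v.
  repeat split; [|exact Hv]. exists u, g, m. repeat split. exact Hu.
Qed.

Lemma bi_ideal_down_closed (x y : T) : B x -> le y x -> B y.
Proof. exact (proj2 (proj2 HB) x y). Qed.

Lemma regular_bi_ideal_mul (u v : T) (g : gamma M) :
  regular M -> B u -> B v -> B (op u g v).
Proof.
  intros Hreg Hu Hv. destruct (proj1 regularP Hreg u) as [g1 [m [h Hle]]].
  apply (bi_ideal_down_closed (op (op u g1 (op m h u)) g v)).
  - apply bi_ideal_mul3; assumption.
  - rewrite <- op_assoc. apply le_op_r. exact Hle.
Qed.

Lemma regular_down_gprod_sub (x : T) :
  regular M -> down M (gprod M B B) x -> B x.
Proof.
  intros Hreg [t [[u [g [v [Hu [Hv ->]]]]] Hle]].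
  apply (bi_ideal_down_closed (op u g v)); [|exact Hle].
  apply regular_bi_ideal_mul; assumption.
Qed.

Lemma regular_right_regular_sub_down_gprod (x : T) :
  regular M -> right_regular M -> B x -> down M (gprod M B B) x.
Proof.
  intros Hreg Hrr Hx.
  destruct (proj1 regularP Hreg x) as [g [m [h Hle]]].
  destruct (right_regular_le Hrr x) as [g' [h' [b Hle']]].
  exists (op x g' (op (op x h' (op b g m)) h x)). split.
  - exists x, g', (op (op x h' (op b g m)) h x).
    repeat split; [exact Hx|]. apply bi_ideal_mul3; assumption.
  - apply (le_trans Hle).
    replace (op x g' (op (op x h' (op b g m)) h x))
      with (op (op (op (op x g' x) h' b) g m) h x) by (rewrite !op_assoc; reflexivity).
    apply le_op_r, le_op_r. exact Hle'.
Qed.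

End BiIdeal.

Definition bi_ideal_gen (a : T) : T -> Prop :=
  down M (fun t => t = a \/ sandwich a t).

Lemma sandwich_mul3 (a u v m : T) (g h : gamma M) :
  u = a \/ sandwich a u -> v = a \/ sandwich a v -> sandwich a (op (op u g m) h v).
Proof.
  rewrite !sandwichP.
  intros [->|[g2 [m2 [h2 ->]]]] [->|[g3 [m3 [h3 ->]]]].
  - exists g, m, h. reflexivity.
  - exists g, (op m h (op a g3 m3)), h3. rewrite !op_assoc. reflexivity.
  - exists g2, (op (op m2 h2 a) g m), h. rewrite !op_assoc. reflexivity.
  - exists g2, (op (op (op m2 h2 a) g m) h (op a g3 m3)), h3.
    rewrite !op_assoc. reflexivity.
Qed.

Lemma sandwich_mul2 (a u v : T) (g : gamma M) :
  u = a \/ sandwich a u -> v = a \/ sandwich a v ->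
  (u = a /\ v = a) \/ sandwich a (op u g v).
Proof.
  rewrite !sandwichP.
  intros [->|[g2 [m2 [h2 ->]]]] [->|[g3 [m3 [h3 ->]]]].
  - left. split; reflexivity.
  - right. exists g, (op a g3 m3), h3. rewrite !op_assoc. reflexivity.
  - right. exists g2, (op m2 h2 a), g. rewrite !op_assoc. reflexivity.
  - right. exists g2, (op (op (op m2 h2 a) g a) g3 m3), h3.
    rewrite !op_assoc. reflexivity.
Qed.

Lemma bi_ideal_gen_bi_ideal (a : T) : bi_ideal M (bi_ideal_gen a).
Proof.
  split; [|split].
  - exists a, a. split; [left; reflexivity|apply le_refl].
  - intros x [p [h [v [[u [g [m [[U [HU Hu]] [_ ->]]]]] [[V [HV Hv]] ->]]]]].
    exists (op (op U g m) h V). split.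
    + right. apply sandwich_mul3; assumption.
    + apply (le_trans (le_op_l Hv)).
      apply le_op_r, le_op_r. exact Hu.
  - intros x y [U [HU Hx]] Hy. exists U. split; [exact HU|exact (le_trans Hy Hx)].
Qed.

Lemma bi_ideal_gen_self (a : T) : bi_ideal_gen a a.
Proof. exists a. split; [left; reflexivity|apply le_refl]. Qed.

Lemma regular_of_bi_ideal_idempotent :
  (forall B : T -> Prop, bi_ideal M B -> set_eq M B (down M (gprod M B B))) ->
  regular M.
Proof.
  intros Hidem. apply regularP. intro a.
  destruct (proj1 (Hidem _ (bi_ideal_gen_bi_ideal a) a) (bi_ideal_gen_self a))
    as [t [[u [g [v [[U [HU Hu]] [[V [HV Hv]] ->]]]]] Hle]].
  assert (Ha : le a (op U g V)).
  { apply (le_trans Hle), (le_trans (le_op_l Hv)), le_op_r, Hu. }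
  destruct (sandwich_mul2 _ _ _ g HU HV) as [[-> ->]|Hs].
  - exists g, a, g. rewrite op_assoc.
    apply (le_trans Ha), le_op_l, Ha.
  - apply sandwichP in Hs. destruct Hs as [g' [m' [h' E]]].
    exists g', m', h'. rewrite <- E. exact Ha.
Qed.

End PoGammaSemigroup.

Theorem proposition6 (M : poGammaSemigroup) :
  (completely_regular M ->
     forall B : carrier M -> Prop, bi_ideal M B -> set_eq M B (down M (gprod M B B))) /\
  ((forall B : carrier M -> Prop, bi_ideal M B -> set_eq M B (down M (gprod M B B))) ->
     regular M).
Proof.
  split.
  - intros [Hreg [_ Hrr]] B HB x. split.
    + apply regular_right_regular_sub_down_gprod; assumption.
    + apply regular_down_gprod_sub; assumption.
  - apply regular_of_bi_ideal_idempotent.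
Qed.
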